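(* Suppose that $\langle s_\alpha : \alpha \in S \rangle$ is a disjoint stationary sequence on $\omega_2$. Then $(\omega_2 \cap \mathrm{cof}(\omega_1)) \setminus S$ is stationary in $\omega_2$.
   Context: For an uncountable ordinal $\alpha < \omega_2$, $P_{\omega_1}(\alpha)$ is the set of countable subsets of $\alpha$; a set $c \subseteq P_{\omega_1}(\alpha)$ is club if it is cofinal (under $\subseteq$) and closed under unions of countable increasing sequences, and $s \subseteq P_{\omega_1}(\alpha)$ is stationary if it meets every club in $P_{\omega_1}(\alpha)$. A disjoint stationary sequence on $\omega_2$ is a sequence $\langle s_\alpha : \alpha \in S \rangle$, where $S$ is a stationary subset of $\omega_2 \cap \mathrm{cof}(\omega_1)$, such that each $s_\alpha$ is a stationary subset of $P_{\omega_1}(\alpha)$ and $s_\alpha \cap s_\beta = \emptyset$ for all $\alpha < \beta$ in $S$. *)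

From HB Require Import structures.
From mathcomp Require Import all_boot all_order.
From mathcomp Require Import boolp classical_sets cardinality.
Set Implicit Arguments. Unset Strict Implicit. Unset Printing Implicit Defensive.
Import Order.TTheory.
Local Open Scope classical_set_scope.
Local Open Scope order_scope.

(* |A| <= aleph_1 : A carries a well-order (of type <= omega_1) all of whose
   proper initial segments are countable. *)
Definition aleph1_small {T : Type} (A : set T) : Prop :=
  exists R : T -> T -> Prop,
    (forall x, A x -> ~ R x x) /\
    (forall x y z, A x -> A y -> A z -> R x y -> R y z -> R x z) /\
    (forall x y, A x -> A y -> x = y \/ R x y \/ R y x) /\
    (forall B : set T, B `<=` A -> B !=set0 ->
        exists2 m, B m & forall y, B y -> ~ R y m) /\
    (forall x, A x -> countable [set y | A y /\ R y x]).

Section Omega2.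
Context {d : Order.disp_t} {T : orderType d}.

(* T is (order-isomorphic to) omega_2: a well-order all of whose proper
   initial segments have size <= aleph_1, but which itself is not of size <= aleph_1. *)
Definition is_omega2 : Prop :=
  [/\ well_founded (fun x y : T => x < y),
      forall a : T, aleph1_small [set b : T | b < a] &
      ~ aleph1_small [set: T]].

Definition segment (a : T) : set T := [set b | b < a].

Definition cofinal_in (a : T) (A : set T) : Prop :=
  A `<=` segment a /\ forall b, b < a -> exists2 c, A c & b <= c.

Definition cof_omega1 (a : T) : Prop :=
  (~ exists A, cofinal_in a A /\ countable A) /\
  (exists A, cofinal_in a A /\ aleph1_small A).

Definition club (C : set T) : Prop :=
  (forall b, exists2 c, C c & b < c) /\
  (forall a, (exists b, b < a) ->
     (forall b, b < a -> exists2 c, C c & b < c /\ c < a) -> C a).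

Definition stationary (X : set T) : Prop :=
  forall C, club C -> X `&` C !=set0.

Definition Pw1 (a : T) : set (set T) :=
  [set x | x `<=` segment a /\ countable x].

Definition club_P (a : T) (c : set (set T)) : Prop :=
  [/\ c `<=` Pw1 a,
      (forall x, Pw1 a x -> exists2 y, c y & x `<=` y) &
      (forall y : nat -> set T, (forall n, c (y n)) ->
          (forall n, y n `<=` y n.+1) -> c (\bigcup_n y n))].

Definition stationary_P (a : T) (s : set (set T)) : Prop :=
  s `<=` Pw1 a /\ forall c, club_P a c -> s `&` c !=set0.

Definition disjoint_stationary_sequence (S : set T) (s : T -> set (set T)) : Prop :=
  [/\ S `<=` cof_omega1, stationary S,
      (forall a, S a -> stationary_P a (s a)) &
      (forall a b, S a -> S b -> a < b -> s a `&` s b = set0)].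

End Omega2.

From mathcomp Require Import all_boot all_order.
From mathcomp Require Import boolp classical_sets cardinality.
Set Implicit Arguments. Unset Strict Implicit. Unset Printing Implicit Defensive.
Import Order.TTheory.
Local Open Scope classical_set_scope.
Local Open Scope order_scope.

(** Let [w] be omega_1, the least point of [T] with uncountably many
    predecessors. Sets of size at most aleph_1 are exactly the unions of [w]
    countable sets, so omega_2 is regular: every [w]-sequence in [T] is bounded.
    Suppose all points of cofinality omega_1 of a club [C] lie in [S]. Write each
    segment [a] as the union of countable sets [Z a k] (k < w) and build an
    increasing sequence [al i] (i < w), with points of [C] in between, such that
    [al i] lies above some [b] in [S] with [x i] in [s b], if there is one; here
    [x i] is the union of the [Z (al j) k] with j, k < i. The supremum [al0] is in
    [C] and has cofinality omega_1, hence is in [S]; the [x i] form a club in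
    P_omega_1(al0), so some [x i] is in [s al0]; but then [x i] is also in [s b]
    for some [b < al i < al0], contradicting disjointness. *)

Lemma subset_countable {U} (A B : set U) : A `<=` B -> countable B -> countable A.
Proof. by move=> AB; apply: sub_countable; apply: subset_card_le. Qed.

Lemma countableU {U} (A B : set U) :
  countable A -> countable B -> countable (A `|` B).
Proof.
move=> cA cB.
apply: (@subset_countable _ _ (\bigcup_(b in [set: bool]) (if b then A else B))).
  by move=> x [Ax|Bx]; [exists true|exists false].
by apply: bigcup_countable => // -[].
Qed.

Lemma countable_inj {U V} (f : U -> V) (A : set U) (B : set V) :
  (forall x y, A x -> A y -> f x = f y -> x = y) ->
  (forall x, A x -> B (f x)) -> countable B -> countable A.
Proof.
move=> f_inj fAB /countable_injP [g g_inj]; apply/countable_injP; exists (g \o f).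
move=> x y; rewrite !inE => Ax Ay /= /g_inj; rewrite !inE.
by move=> /(_ (fAB _ Ax) (fAB _ Ay)); exact: f_inj.
Qed.

Section WellOrder.
Context {d : Order.disp_t} {T : orderType d}.
Hypothesis wfT : well_founded (fun x y : T => x < y).

Lemma wf_min (P : set T) : P !=set0 -> exists2 m, P m & forall y, P y -> m <= y.
Proof.
move=> [x Px]; apply: contrapT => nomin.
elim/(well_founded_ind wfT): x Px => x IH Px; apply: nomin; exists x => // y Py.
by rewrite leNgt; apply/negP => yx; exact: IH yx Py.
Qed.

Lemma wf_rec_exists (X : Type) (x0 : X) (G : T -> (T -> X) -> X) :
  (forall i h h', (forall j, j < i -> h j = h' j) -> G i h = G i h') ->
  exists f : T -> X, forall i, f i = G i f.
Proof.
move=> G_local.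
pose F i (rec : forall j, j < i -> X) :=
  G i (fun j => if pselect (j < i) is left ji then rec j ji else x0).
exists (Fix wfT (fun _ => X) F) => i; rewrite Fix_eq.
  by apply: G_local => j ji; case: pselect.
by move=> x f g fg; congr (G x _); apply: funext => j; case: pselect.
Qed.

Lemma wf_lub (I : Type) (D : set I) (f : I -> T) (b : T) :
  (forall i, D i -> f i <= b) ->
  exists m, [/\ m <= b, forall i, D i -> f i <= m &
                forall c, c < m -> exists2 i, D i & c < f i].
Proof.
move=> fb.
have [|m [mb fm] m_min] := @wf_min [set m | m <= b /\ forall i, D i -> f i <= m].
  by exists b.
exists m; split=> // c cm; apply: contrapT => nc.
suff : m <= c by rewrite leNgt cm.
apply: m_min; split; first exact: ltW (lt_le_trans cm mb).
by move=> i Di; rewrite leNgt; apply/negP => cf; apply: nc; exists i.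
Qed.

Lemma aleph1_small_lt (A : set T) :
  (forall x, A x -> countable [set y | A y /\ y < x]) -> aleph1_small A.
Proof.
move=> cA; exists (fun x y => x < y); split; first by move=> x _; rewrite ltxx.
split; first by move=> x y z _ _ _; apply: lt_trans.
split; first by move=> x y _ _; have [h|h|h] := ltgtP x y; auto.
split=> // B _ /wf_min [m Bm mB]; exists m => // y /mB.
by rewrite leNgt => /negP.
Qed.

Lemma exists_omega1 : ~ aleph1_small [set: T] ->
  exists2 w : T, ~ countable (segment w) & forall i, i < w -> countable (segment i).
Proof.
move=> T_big.
have [|w w_unc w_min] := @wf_min [set w | ~ countable (segment w)].
  apply: contrapT => all_cnt; apply: T_big; apply: aleph1_small_lt => x _.
  apply: (@subset_countable _ _ (segment x)); first by move=> y [].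
  by apply: contrapT => ncx; apply: all_cnt; exists x.
by exists w => // i iw; apply: contrapT => /w_min; rewrite leNgt iw.
Qed.

Definition square_union (F : T -> T -> set T) (i : T) : set T :=
  \bigcup_(j in segment i) \bigcup_(k in segment i) F j k.

Lemma eq_square_union (F G : T -> T -> set T) i :
  (forall j k, j < i -> k < i -> F j k = G j k) ->
  square_union F i = square_union G i.
Proof. by move=> FG; apply: eq_bigcupr => j ji; apply: eq_bigcupr => k; apply: FG. Qed.

Lemma square_unionS (F : T -> T -> set T) i i' :
  i <= i' -> square_union F i `<=` square_union F i'.
Proof.
move=> ii' z [j ji [k ki Fz]].
by exists j; [exact: lt_le_trans ji ii' | exists k => //; exact: lt_le_trans ki ii'].
Qed.

Section Omega1.
Variable w : T.
Hypotheses (w_unc : ~ countable (segment w))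
  (w_cnt : forall i, i < w -> countable (segment i)).

Lemma countable_bounded (A : set T) :
  A `<=` segment w -> countable A -> exists2 k, k < w & forall a, A a -> a < k.
Proof.
move=> Aw cA.
have [k kw nk] : exists2 k, k < w & ~ (A `|` \bigcup_(a in A) segment a) k.
  apply: contrapT => nok; apply: w_unc.
  apply: (@subset_countable _ _ (A `|` \bigcup_(a in A) segment a)).
    by move=> k kw; apply: contrapT => nk; apply: nok; exists k.
  by apply: countableU => //; apply: bigcup_countable => // a /Aw; exact: w_cnt.
exists k => // a Aa; rewrite ltNge le_eqVlt; apply/negP => /orP[/eqP ka|ka].
  by apply: nk; left; rewrite ka.
by apply: nk; right; exists a.
Qed.

Lemma omega1_no_max i : i < w -> exists2 k, k < w & i < k.
Proof.
move=> iw; have [|k kw ik] := @countable_bounded [set i] _ (countable1 i).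
  by move=> _ ->.
by exists k => //; exact: ik.
Qed.

Lemma square_union_countable (F : T -> T -> set T) i : i < w ->
  (forall j k, j < i -> k < i -> countable (F j k)) -> countable (square_union F i).
Proof.
move=> iw cF; apply: bigcup_countable => [|j ji]; first exact: w_cnt.
by apply: bigcup_countable => [|k ki]; [exact: w_cnt | exact: cF].
Qed.

Lemma square_union_cofinal (F : T -> T -> set T) (x : set T) : countable x ->
  x `<=` \bigcup_(j in segment w) \bigcup_(k in segment w) F j k ->
  exists2 i, i < w & x `<=` square_union F i.
Proof.
move=> cx xF.
have /choice [jk jkP] : forall z, exists p : T * T,
    x z -> [/\ p.1 < w, p.2 < w & F p.1 p.2 z].
  move=> z; case: (pselect (x z)) => [/xF [j jw [k kw Fz]]|nz]; first by exists (j, k).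
  by exists (w, w) => /nz.
pose m z := Order.max (jk z).1 (jk z).2.
have [|i iw mi] := @countable_bounded (m @` x) _ (sub_countable (card_image_le _ _) cx).
  by move=> _ [z xz <-]; have [jw kw _] := jkP z xz; rewrite /segment /= gt_max jw kw.
exists i => // z xz; have [_ _ Fz] := jkP z xz.
have /andP [ji ki] : ((jk z).1 < i) && ((jk z).2 < i).
  by rewrite -gt_max; apply: mi; exists z.
by exists (jk z).1 => //; exists (jk z).2.
Qed.

Lemma bigcup_square_union (F : T -> T -> set T) (idx : nat -> T) :
  (forall n, idx n < w) ->
  exists2 m, m < w & \bigcup_n square_union F (idx n) = square_union F m.
Proof.
move=> idxw.
have cidx : countable (range idx).
  exact: sub_countable (card_image_le idx _) (countableP _).
have [|k kw idxk] := countable_bounded _ cidx.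
  by move=> _ [n _ <-]; exact: idxw.
have [|m [mk idxm m_lub]] := @wf_lub _ [set: nat] idx k.
  by move=> n _; apply/ltW/idxk; exists n.
exists m; first exact: le_lt_trans mk kw.
apply/seteqP; split; first by move=> z [n _]; apply: square_unionS; exact: idxm.
move=> z [j jm [l lm Fz]].
have [|n _] := m_lub (Order.max j l); first by rewrite gt_max jm lm.
by rewrite gt_max => /andP [jn ln]; exists n => //; exists j => //; exists l.
Qed.

Lemma club_P_square_union (a : T) (F : T -> T -> set T) :
  (forall j k, j < w -> k < w -> countable (F j k) /\ F j k `<=` segment a) ->
  segment a `<=` \bigcup_(j in segment w) \bigcup_(k in segment w) F j k ->
  club_P a (square_union F @` segment w).
Proof.
move=> Fa aF; split.
- move=> _ [i iw <-]; split.
    move=> z [j ji [k ki Fz]].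
    by apply: (proj2 (Fa j k _ _)) Fz; exact: lt_trans iw.
  apply: square_union_countable => // j k ji ki.
  by apply: (proj1 (Fa j k _ _)); exact: lt_trans iw.
- move=> x [xa cx]; have [i iw xi] := square_union_cofinal cx (subset_trans xa aF).
  by exists (square_union F i) => //; exists i.
- move=> y yc _.
  have /choice [idx idxP] : forall n, exists i, i < w /\ square_union F i = y n.
    by move=> n; have [i iw <-] := yc n; exists i.
  have -> : \bigcup_n y n = \bigcup_n square_union F (idx n).
    by apply: eq_bigcupr => n _; rewrite (idxP n).2.
  by have [m mw ->] := bigcup_square_union F (fun n => (idxP n).1); exists m.
Qed.

Definition omega1_union (A : set T) : Prop :=
  exists Z : T -> set T,
    (forall i, i < w -> countable (Z i)) /\ A = \bigcup_(i in segment w) Z i.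

Lemma omega1_unionS (A B : set T) : B `<=` A -> omega1_union A -> omega1_union B.
Proof.
move=> BA [Z [cZ AZ]]; exists (fun i => Z i `&` B); split.
  by move=> i iw; apply: subset_countable (cZ i iw); exact: subIsetl.
apply/seteqP; split=> [z Bz|z [i iw [_ Bz]]] //.
by have := BA z Bz; rewrite AZ => -[i iw Zz]; exists i.
Qed.

Lemma omega1_unionU (A B : set T) :
  omega1_union A -> omega1_union B -> omega1_union (A `|` B).
Proof.
move=> [ZA [cA ->]] [ZB [cB ->]]; exists (fun i => ZA i `|` ZB i).
by split; [move=> i iw; apply: countableU; [exact: cA | exact: cB] | rewrite bigcupU].
Qed.

Lemma omega1_union_image (f : T -> T) : omega1_union (f @` segment w).
Proof.
exists (fun i => [set f i]).
by split; [move=> i _; exact: countable1 | rewrite bigcup_imset1].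
Qed.

Lemma omega1_union_bigcup (F : T -> set T) :
  (forall j, j < w -> omega1_union (F j)) ->
  omega1_union (\bigcup_(j in segment w) F j).
Proof.
move=> FZ.
have /choice [Z ZP] : forall j, exists Zj : T -> set T, j < w ->
    (forall i, i < w -> countable (Zj i)) /\ F j = \bigcup_(i in segment w) Zj i.
  move=> j; case: (pselect (j < w)) => [/FZ [Zj ?]|jw]; first by exists Zj.
  by exists (fun=> set0) => /jw.
exists (square_union Z); split.
  move=> k kw; apply: square_union_countable => // j i jk ik.
  by apply: (proj1 (ZP j _)); exact: lt_trans kw.
apply/seteqP; split.
  move=> z [j jw]; rewrite (proj2 (ZP j jw)) => -[i iw Zz].
  have [|k kw zk] := @square_union_cofinal Z [set z] (countable1 z).
    by move=> _ ->; exists j => //; exists i.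
  by exists k => //; exact: zk.
move=> z [k kw [j jk [i ik Zz]]]; have jw := lt_trans jk kw; exists j => //.
by rewrite (proj2 (ZP j jw)); exists i => //; exact: lt_trans kw.
Qed.

Lemma omega1_union_aleph1_small (A : set T) : aleph1_small A -> omega1_union A.
Proof.
move=> [R [_ [_ [R_tot [R_min R_cnt]]]]].
pose least (X : set T) r := [/\ A r, ~ X r & forall u, A u -> ~ X u -> ~ R u r].
have least_uniq X r1 r2 : least X r1 -> least X r2 -> r1 = r2.
  move=> [A1 X1 m1] [A2 X2 m2].
  have [//|[R12|R21]] := R_tot r1 r2 A1 A2.
    by case: (m2 r1 A1 X1).
  by case: (m1 r2 A2 X2).
have least_exists X z : A z -> ~ X z -> exists r, least X r.
  move=> Az Xz.
  have [r [Ar Xr] r_min] := R_min [set u | A u /\ ~ X u] (fun u => @proj1 _ _)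
    (ex_intro _ z (conj Az Xz)).
  by exists r; split=> // u Au Xu; apply: r_min.
(* [y i] is the [R]-least element of [A] not enumerated before stage [i]; an
   element never enumerated would have [w] distinct [R]-predecessors. *)
have [|y yE] :=
  @wf_rec_exists _ set0 (fun i y => least (\bigcup_(k in segment i) y k)).
  by move=> i h h' hh; congr least; apply: eq_bigcupr => k ki; exact: hh.
exists y; split.
  move=> i _; apply/countable_injP; exists (fun=> 0%N) => r1 r2.
  by rewrite !inE yE => l1 l2 _; exact: least_uniq l1 l2.
apply/seteqP; split; last by move=> r [i _]; rewrite yE => -[].
move=> z Az; apply: contrapT => zy.
have zX i : i < w -> ~ (\bigcup_(k in segment i) y k) z.
  by move=> iw [k ki ykz]; apply: zy; exists k => //; exact: lt_trans iw.
have /choice [r rP] :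
    forall i, exists r, i < w -> least (\bigcup_(k in segment i) y k) r.
  move=> i; case: (pselect (i < w)) => [iw|iw]; last by exists z => /iw.
  by have [r ?] := least_exists _ z Az (zX i iw); exists r.
apply: w_unc; apply: (@countable_inj _ _ r _ [set u | A u /\ R u z]).
- move=> i1 i2 i1w i2w e; have [l|l|//] := ltgtP i1 i2.
    have [_ + _] := rP i2 i2w; rewrite -e; case.
    by exists i1 => //; rewrite yE; exact: rP.
  have [_ + _] := rP i1 i1w; rewrite e; case.
  by exists i2 => //; rewrite yE; exact: rP.
- move=> i iw; have [Ar _ r_min] := rP i iw; split=> //.
  have [e|[//|zr]] := R_tot (r i) z Ar Az; last by case: (r_min z Az (zX i iw)).
  by case: zy; exists i => //; rewrite yE -e; exact: rP.
- exact: R_cnt.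
Qed.

Lemma aleph1_small_omega1_union (A : set T) : omega1_union A -> aleph1_small A.
Proof.
move=> [Z [cZ AZ]].
have /choice [io ioP] : forall t, exists i, A t -> i < w /\ Z i t.
  move=> t; case: (pselect (A t)) => [|nt]; last by exists w => /nt.
  by rewrite AZ => -[i iw Zt]; exists i.
exists (fun x y => io x < io y \/ io x = io y /\ x < y).
split; first by move=> x _ [|[]]; rewrite ltxx.
split.
  move=> x y v _ _ _ [l1|[e1 l1]] [l2|[e2 l2]].
  - by left; exact: lt_trans l2.
  - by left; rewrite -e2.
  - by left; rewrite e1.
  - by right; split; [rewrite e1 | exact: lt_trans l2].
split.
  move=> x y _ _; have [l|l|e] := ltgtP (io x) (io y); [by auto | by auto |].
  by have [l|l|->] := ltgtP x y; auto.
split.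
  move=> B _ [b Bb].
  have [_ [t0 Bt0 <-] i0_min] := @wf_min (io @` B) (ex_intro _ _ (imageP io Bb)).
  have [m [Bm em] m_min] :=
    @wf_min [set t | B t /\ io t = io t0] (ex_intro _ t0 (conj Bt0 erefl)).
  exists m => // u Bu [l|[e l]].
    by have := i0_min _ (imageP io Bu); rewrite -em leNgt l.
  by have := m_min u (conj Bu (etrans e em)); rewrite leNgt l.
move=> x Ax; have [k kw xk] := omega1_no_max (proj1 (ioP x Ax)).
apply: (@subset_countable _ _ (\bigcup_(i in segment k) Z i)).
  move=> u [Au Ru]; exists (io u); last exact: (ioP u Au).2.
  by case: Ru => [l|[-> _]]; [exact: lt_trans xk | exact: xk].
by apply: bigcup_countable => [|i ik]; [exact: w_cnt | apply: cZ; exact: lt_trans kw].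
Qed.

Lemma cof_omega1_lub (f : T -> T) (a : T) :
  (forall i j, i < j -> j < w -> f i < f j) -> (forall i, i < w -> f i < a) ->
  (forall c, c < a -> exists2 i, i < w & c < f i) -> cof_omega1 a.
Proof.
move=> f_incr fa f_lub; split.
- move=> [A [[Aa A_cof] cA]].
  have /choice [ia iaP] : forall c, exists i, A c -> i < w /\ c < f i.
    move=> c; case: (pselect (A c)) => [/Aa/f_lub [i iw ci]|nc]; first by exists i.
    by exists w => /nc.
  have [|k kw iak] := countable_bounded _ (sub_countable (card_image_le ia _) cA).
    by move=> _ [c Ac <-]; exact: (iaP c Ac).1.
  have [c Ac kc] := A_cof (f k) (fa k kw); have [_ cf] := iaP c Ac.
  have fk := f_incr _ _ (iak _ (imageP ia Ac)) kw.
  by have := lt_le_trans (lt_trans cf fk) kc; rewrite ltxx.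
- exists (f @` segment w); split; last exact/aleph1_small_omega1_union/omega1_union_image.
  split; first by move=> _ [i iw <-]; exact: fa.
  by move=> c /f_lub [i iw ci]; exists (f i); [exists i | exact: ltW].
Qed.

End Omega1.

Section Omega2.
Hypotheses (T_seg : forall a : T, aleph1_small (segment a))
  (T_big : ~ aleph1_small [set: T]).
Variable w : T.
Hypotheses (w_unc : ~ countable (segment w))
  (w_cnt : forall i, i < w -> countable (segment i)).

Lemma omega1_seq_ub (h : T -> T) : exists b, forall j, j < w -> h j < b.
Proof.
apply: contrapT => no_ub; apply/T_big/(aleph1_small_omega1_union w_unc w_cnt).
apply: (@omega1_unionS w ((\bigcup_(j in segment w) segment (h j)) `|` h @` segment w)).
  move=> t _; apply: contrapT => nt; apply: no_ub; exists t => j jw.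
  rewrite ltNge le_eqVlt; apply/negP => /orP[/eqP tj|tj]; apply: nt.
    by right; exists j.
  by left; exists j.
apply: omega1_unionU; last exact: omega1_union_image.
by apply: (omega1_union_bigcup w_unc w_cnt) => j _; exact: omega1_union_aleph1_small.
Qed.

End Omega2.

Section DisjointStationarySequence.
Variable w : T.
Hypotheses (w_unc : ~ countable (segment w))
  (w_cnt : forall i, i < w -> countable (segment i)).
Variables (S : set T) (s : T -> set (set T)) (C : set T).
Hypotheses (C_club : club C) (s_stat : forall a, S a -> stationary_P a (s a))
  (s_disj : forall a b, S a -> S b -> a < b -> s a `&` s b = set0).
Variables (ub : (T -> T) -> T) (next : T -> T) (Z : T -> T -> set T) (pick : set T -> T).
Hypotheses (ubP : forall h j, j < w -> h j < ub h)
  (nextP : forall b, C (next b) /\ b < next b)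
  (ZP : forall a, (forall i, i < w -> countable (Z a i)) /\
                  segment a = \bigcup_(i in segment w) Z a i)
  (pickP : forall x b, S b -> s b x -> S (pick x) /\ s (pick x) x).

(* [ub] bounds the values at all [j < w]: those at [j < i] put [al i] above
   [next (al j)], the one at [j = i] puts it above [pick] of the [i]-th set. *)
Definition club_step (al : T -> T) (i : T) : T -> T :=
  fun j => if j < i then next (al j) else pick (square_union (Z \o al) i).

Lemma exists_club_step_fixpoint :
  exists al : T -> T, forall i, al i = ub (club_step al i).
Proof.
apply: (@wf_rec_exists _ w) => i h h' hh; congr ub; rewrite /club_step.
have -> : square_union (Z \o h) i = square_union (Z \o h') i.
  by apply: eq_square_union => j k ji _ /=; rewrite hh.
by apply: funext => j; case: ifP => // /hh ->.
Qed.

Section ClubStepSequence.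
Variable al : T -> T.
Hypothesis alE : forall i, al i = ub (club_step al i).

Lemma club_step_next_lt j i : j < i -> i < w -> next (al j) < al i.
Proof.
move=> ji iw; have := ubP (club_step al i) (lt_trans ji iw).
by rewrite -alE /club_step ji.
Qed.

Lemma club_step_pick_lt i : i < w -> pick (square_union (Z \o al) i) < al i.
Proof. by move=> iw; have := ubP (club_step al i) iw; rewrite -alE /club_step ltxx. Qed.

Lemma club_step_incr i j : i < j -> j < w -> al i < al j.
Proof. by move=> ij jw; exact: lt_trans (nextP _).2 (club_step_next_lt ij jw). Qed.

Variable al0 : T.
Hypotheses (al_le : forall i, i < w -> al i <= al0)
  (al_lub : forall c, c < al0 -> exists2 i, i < w & c < al i).

Lemma club_step_lt_lub i : i < w -> al i < al0.
Proof.
move=> iw; have [k kw ik] := omega1_no_max w_unc w_cnt iw.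
exact: lt_le_trans (club_step_incr ik kw) (al_le kw).
Qed.

Lemma club_step_lub_cof : cof_omega1 al0.
Proof. exact: (cof_omega1_lub w_unc w_cnt club_step_incr club_step_lt_lub al_lub). Qed.

Lemma club_step_lub_club : C al0.
Proof.
have [_ C_closed] := C_club; apply: C_closed.
  have [i iw] : exists i, i < w.
    apply: contrapT => nw; apply/w_unc/(@subset_countable _ _ set0) => // i iw.
    by apply: nw; exists i.
  by exists (al i); exact: club_step_lt_lub.
move=> c /al_lub [i iw ci]; have [k kw ik] := omega1_no_max w_unc w_cnt iw.
exists (next (al i)); first exact: (nextP _).1.
split; first exact: lt_trans ci (nextP _).2.
exact: lt_trans (club_step_next_lt ik kw) (club_step_lt_lub kw).
Qed.

Lemma club_P_club_step : club_P al0 (square_union (Z \o al) @` segment w).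
Proof.
apply: (club_P_square_union w_unc w_cnt) => [j k jw kw|c /al_lub [j jw cj]].
  have [cZ segE] := ZP (al j); split; first exact: cZ.
  move=> z Zz; have : segment (al j) z by rewrite segE; exists k.
  by move=> zj; exact: lt_trans zj (club_step_lt_lub jw).
have : segment (al j) c := cj.
by rewrite (ZP (al j)).2 => -[k kw Zc]; exists j => //; exists k.
Qed.

Lemma club_step_lub_notin : ~ S al0.
Proof.
move=> Sal0; have [x [sx [i iw xi]]] := (s_stat Sal0).2 _ club_P_club_step; subst x.
have [Sb sb] := pickP Sal0 sx.
have := s_disj Sb Sal0 (lt_trans (club_step_pick_lt iw) (club_step_lt_lub iw)).
by move/seteqP => [sub _]; exact: sub _ (conj sb sx).
Qed.

End ClubStepSequence.

Lemma club_meets_cof_omega1_setD : exists a, [/\ cof_omega1 a, C a & ~ S a].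
Proof.
have [al alE] := exists_club_step_fixpoint.
have [|al0 [_ al_le al_lub]] := @wf_lub _ (segment w) al (ub al).
  by move=> i iw; exact/ltW/ubP.
exists al0; split.
- exact: (club_step_lub_cof alE al_le al_lub).
- exact: (club_step_lub_club alE al_le al_lub).
- exact: (club_step_lub_notin alE al_le al_lub).
Qed.

End DisjointStationarySequence.
End WellOrder.

Theorem proposition1p5 (d : Order.disp_t) (T : orderType d)
  (hT : @is_omega2 d T) (S : set T) (s : T -> set (set T)) :
  disjoint_stationary_sequence S s ->
  stationary ([set a | cof_omega1 a] `\` S).
Proof.
case: hT => wfT T_seg T_big [_ _ s_stat s_disj] C C_club.
have [w w_unc w_cnt] := exists_omega1 wfT T_big.
have /choice [ub ubP] := omega1_seq_ub wfT T_seg T_big w_unc w_cnt.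
have /choice [Z ZP] : forall a, exists Za : T -> set T,
    (forall i, i < w -> countable (Za i)) /\ segment a = \bigcup_(i in segment w) Za i.
  by move=> a; exact: (omega1_union_aleph1_small wfT w_unc (T_seg a)).
have /choice [next nextP] : forall b, exists c, C c /\ b < c.
  by move=> b; have [c Cc bc] := C_club.1 b; exists c.
have /choice [pick pickP] : forall x, exists p, forall b, S b -> s b x -> S p /\ s p x.
  move=> x; case: (pselect (exists b, S b /\ s b x)) => [[b [Sb sbx]]|none].
    by exists b.
  by exists w => b Sb sbx; case: none; exists b.
have [a [ca Ca nSa]] :=
  club_meets_cof_omega1_setD wfT w_unc w_cnt C_club s_stat s_disj ubP nextP ZP pickP.
by exists a.
Qed.
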